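(* Let $X$ be a Hausdorff space without isolated points. If \textsc{Bob} has a winning strategy in the game $\mathsf{BM}_\mathrm{fin}(X)$, then \textsc{Bob} has a winning strategy in $\mathsf{BM}_\mathrm{fin}(X)$ in which every move $\mathcal{B}_n$ of \textsc{Bob} consists of pairwise disjoint sets.
   Context: The game $\mathsf{BM}_\mathrm{fin}(X)$ on a topological space $X$ is played by \textsc{Alice} and \textsc{Bob} as follows. \textsc{Alice} plays a non-empty open set $A_0$; \textsc{Bob} plays a finite collection $\mathcal{B}_0$ of non-empty open subsets of $A_0$. In inning $n+1$, for each $B \in \mathcal{B}_n$ \textsc{Alice} plays a non-empty open set $A_B \subseteq B$; let $\mathcal{A}_{n+1}=\{A_B : B\in\mathcal{B}_n\}$; then \textsc{Bob} plays a finite collection $\mathcal{B}_{n+1}$ of non-empty open subsets of $\bigcup\mathcal{A}_{n+1}$. Put $B_n=\bigcup\mathcal{B}_n$. \textsc{Bob} wins the play if $\bigcap_{n\in\omega}B_n\neq\emptyset$; otherwise \textsc{Alice} wins. A strategy for \textsc{Bob} is a function assigning a legal move of \textsc{Bob} to each finite sequence of previous moves of \textsc{Alice}; it is winning if \textsc{Bob} wins every play in which he follows it. *)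

From mathcomp Require Import all_boot all_order.
From mathcomp Require Import all_classical all_reals all_analysis.
Set Implicit Arguments. Unset Strict Implicit. Unset Printing Implicit Defensive.
Local Open Scope classical_set_scope.

(* A finite collection of open sets is represented by a list; a move of Alice
   answering Bob's list [B_0; ...; B_{k-1}] is a list [A_0; ...; A_{k-1}]
   with A_i a nonempty open subset of B_i.  Alice's first move A_0 is encoded
   as the one-element list [:: A_0], answering the fictitious Bob move [:: setT]. *)

Section BMfin.
Variable T : topologicalType.

Definition unionl (s : seq (set T)) : set T :=
  [set x | exists i, (i < size s)%N /\ nth set0 s i x].

Definition alice_legal (b a : seq (set T)) : Prop :=
  size a = size b /\
  forall i, (i < size a)%N ->
    [/\ open (nth set0 a i), nth set0 a i !=set0 & nth set0 a i `<=` nth set0 b i].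

Definition bob_legal (a b : seq (set T)) : Prop :=
  forall i, (i < size b)%N ->
    [/\ open (nth set0 b i), nth set0 b i !=set0 & nth set0 b i `<=` unionl a].

(* A strategy of Bob: previous moves of Alice (A_0, ..., A_n) |-> B_n *)
Definition bob_strategy := seq (seq (set T)) -> seq (set T).

Definition history (alice : nat -> seq (set T)) (n : nat) := mkseq alice n.+1.

Definition prevB (sigma : bob_strategy) (alice : nat -> seq (set T)) (n : nat)
  : seq (set T) :=
  match n with
  | 0 => [:: setT]
  | k.+1 => sigma (history alice k)
  end.

Definition alice_legal_upto (sigma : bob_strategy) alice n :=
  forall k, (k <= n)%N -> alice_legal (prevB sigma alice k) (alice k).

Definition strategy_legal (sigma : bob_strategy) : Prop :=
  forall alice n, alice_legal_upto sigma alice n ->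
    bob_legal (alice n) (sigma (history alice n)).

Definition winning_strategy (sigma : bob_strategy) : Prop :=
  strategy_legal sigma /\
  forall alice : nat -> seq (set T),
    (forall n, alice_legal (prevB sigma alice n) (alice n)) ->
    \bigcap_(n in setT) unionl (sigma (history alice n)) !=set0.

Definition pairwise_disjoint (s : seq (set T)) : Prop :=
  forall i j, (i < j)%N -> (j < size s)%N -> nth set0 s i `&` nth set0 s j = set0.

Definition disjoint_moves (sigma : bob_strategy) : Prop :=
  forall alice n, alice_legal_upto sigma alice n ->
    pairwise_disjoint (sigma (history alice n)).

End BMfin.

Definition no_isolated_points (T : topologicalType) : Prop :=
  forall x : T, ~ open [set x].

From mathcomp Require Import all_boot all_order.
From mathcomp Require Import all_classical all_reals all_analysis.
Set Implicit Arguments. Unset Strict Implicit. Unset Printing Implicit Defensive.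
Local Open Scope classical_set_scope.

(* Bob replaces each move of a winning strategy by pairwise disjoint nonempty
   open subsets of its sets.  Alice's legal answers to the shrunken move are
   legal answers to the original one, and Bob's next original move lies in
   Alice's answer, hence in the shrunken move: so the shrunken moves still
   have a common point.  The shrinking exists because in a Hausdorff space
   without isolated points two nonempty open sets contain distinct points,
   which can be separated by disjoint open neighbourhoods. *)

Definition open_shrinking (T : topologicalType) (B A : set T) :=
  [/\ open A, A !=set0 & A `<=` B].

Definition opens_have_disjoint_subsets (T : topologicalType) :=
  forall B C : set T, open B -> B !=set0 -> open C -> C !=set0 ->
  exists B' C', [/\ open_shrinking B B', open_shrinking C C' & B' `&` C' = set0].

Section Shrinking.
Variable T : topologicalType.
Implicit Types (a b c s v : seq (set T)) (A B : set T).

Definition open_nonempty s :=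
  forall i, (i < size s)%N -> open (nth set0 s i) /\ nth set0 s i !=set0.

Lemma alice_legal_open_nonempty b a : alice_legal b a -> open_nonempty a.
Proof. by move=> [_ legal] i /legal []. Qed.

Lemma bob_legal_open_nonempty a b : bob_legal a b -> open_nonempty b.
Proof. by move=> legal i /legal []. Qed.

Lemma alice_legal_cons B A b a :
  open_shrinking B A -> alice_legal b a ->
  alice_legal (B :: b) (A :: a).
Proof.
move=> shrinkA [sz legal]; split; first by rewrite /= sz.
by case=> [|i] //=; apply: legal.
Qed.

Lemma open_shrinking_trans C B A :
  open_shrinking C B -> open_shrinking B A -> open_shrinking C A.
Proof. by move=> [_ _ BC] [oA A0 AB]; split=> // x /AB /BC. Qed.

Lemma alice_legal_trans c b a :
  alice_legal c b -> alice_legal b a -> alice_legal c a.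
Proof.
move=> [szb lb] [sza la]; split=> [|i ia]; first by rewrite sza.
by apply: open_shrinking_trans (la i ia); apply: lb; rewrite -sza.
Qed.

Lemma alice_legal_unionl b a : alice_legal b a -> unionl a `<=` unionl b.
Proof.
move=> [sz legal] x [i [ia xi]]; have [_ _ ab] := legal i ia.
by exists i; split; [rewrite -sz | exact: ab].
Qed.

Lemma bob_legal_shrink a b b' : bob_legal a b -> alice_legal b b' -> bob_legal a b'.
Proof.
move=> lb [sz lb'] i ib'; have [open_i nonempty_i sub] := lb' i ib'.
rewrite sz in ib'; have [_ _ ba] := lb i ib'.
by split=> // x /sub /ba.
Qed.

Lemma pairwise_disjoint_shrink v v' :
  alice_legal v v' -> pairwise_disjoint v -> pairwise_disjoint v'.
Proof.
move=> [sz legal] dv i j ij jv'; have iv' := ltn_trans ij jv'.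
have [_ _ si] := legal i iv'; have [_ _ sj] := legal j jv'.
by apply: subsetI_eq0 si sj _; apply: dv ij _; rewrite -sz.
Qed.

Lemma pairwise_disjoint_cons B v :
  (forall i, (i < size v)%N -> B `&` nth set0 v i = set0) ->
  pairwise_disjoint v -> pairwise_disjoint (B :: v).
Proof. by move=> Bv dv [|i] [|j] //= ij; [apply: Bv | apply: dv]. Qed.

Hypothesis opens_disjoint : opens_have_disjoint_subsets T.

Lemma open_disjoint_from_seq B v : open B -> B !=set0 -> open_nonempty v ->
  exists B' v', [/\ open_shrinking B B', alice_legal v v' &
    forall i, (i < size v')%N -> B' `&` nth set0 v' i = set0].
Proof.
elim: v B => [|C v IH] B oB B0 onv.
  by exists B, [::]; split=> //; split.
have [oC C0] := onv 0%N erefl.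
have [B1 [C1 [[oB1 B10 B1B] shrinkC1 BC1]]] := opens_disjoint oB B0 oC C0.
have [|B2 [v2 [shrinkB2 lv2 Bv2]]] := IH B1 oB1 B10.
  by move=> i iv; apply: (onv i.+1).
exists B2, (C1 :: v2); split.
- exact: open_shrinking_trans shrinkB2.
- exact: alice_legal_cons.
- case=> [|i] /= iv; last exact: Bv2.
  by case: shrinkB2 => _ _ B2B1; apply: subsetI_eq0 B2B1 _ BC1.
Qed.

Lemma disjoint_shrinking_exists s : open_nonempty s ->
  exists v, alice_legal s v /\ pairwise_disjoint v.
Proof.
elim: s => [|B s IH] ons.
  by exists [::]; split; [split | move=> i j].
have [oB B0] := ons 0%N erefl.
have [|v [lv dv]] := IH; first by move=> i iv; apply: (ons i.+1).
have [B' [v' [shrinkB' lv' B'v']]] :=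
  open_disjoint_from_seq oB B0 (alice_legal_open_nonempty lv).
exists (B' :: v'); split.
- exact/alice_legal_cons/(alice_legal_trans lv).
- exact/pairwise_disjoint_cons/(pairwise_disjoint_shrink lv').
Qed.

Definition disjoint_shrinking s : seq (set T) :=
  if pselect (exists v, alice_legal s v /\ pairwise_disjoint v) is left ex
  then projT1 (cid ex) else s.

Lemma disjoint_shrinkingP s : open_nonempty s ->
  alice_legal s (disjoint_shrinking s) /\ pairwise_disjoint (disjoint_shrinking s).
Proof.
move=> /disjoint_shrinking_exists ex; rewrite /disjoint_shrinking.
by case: pselect => [ex'|//]; case: cid.
Qed.

End Shrinking.

Lemma open_has_other_point (T : topologicalType) (C : set T) :
  no_isolated_points T -> open C -> C !=set0 -> forall y, exists2 x, C x & x <> y.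
Proof.
move=> noiso oC [z Cz] y; apply: contrapT => noother.
have Cy : C = [set y].
  apply/seteqP; split=> [x Cx|x ->].
  - by apply: contrapT => xy; apply: noother; exists x.
  - by apply: contrapT => zy; apply: noother; exists z => // zy'; apply: zy; rewrite -zy'.
by apply: (noiso y); rewrite -Cy.
Qed.

Lemma hausdorff_opens_have_disjoint_subsets (T : topologicalType) :
  hausdorff_space T -> no_isolated_points T -> opens_have_disjoint_subsets T.
Proof.
move=> hT noiso B C oB [y By] oC C0.
have [x Cx xy] := open_has_other_point noiso oC C0 y.
have yx : y != x by apply/eqP => yx; apply: xy.
move: hT; rewrite open_hausdorff => /(_ y x yx) [[U W]] /= [yU xW] [oU oW /eqP UW].
rewrite !inE in yU xW.
exists (B `&` U), (C `&` W); split.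
- by split; [exact: openI | exists y | move=> w []].
- by split; [exact: openI | exists x | move=> w []].
- by apply/seteqP; split=> w // [[_ wU] [_ wW]]; rewrite -UW.
Qed.

Section DisjointRefinement.
Variable T : topologicalType.
Hypothesis opens_disjoint : opens_have_disjoint_subsets T.
Variable sigma : bob_strategy T.
Hypothesis sigma_legal : strategy_legal sigma.

Definition disjoint_refinement : bob_strategy T :=
  fun h => disjoint_shrinking (sigma h).

Lemma disjoint_refinement_move alice n :
  alice_legal_upto sigma alice n ->
  alice_legal (sigma (history alice n)) (disjoint_refinement (history alice n)) /\
  pairwise_disjoint (disjoint_refinement (history alice n)).
Proof.
move=> /sigma_legal /bob_legal_open_nonempty.
exact: disjoint_shrinkingP opens_disjoint _.
Qed.

Lemma disjoint_refinement_legal_upto alice n :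
  alice_legal_upto disjoint_refinement alice n -> alice_legal_upto sigma alice n.
Proof.
elim: n => [|n IH] legal k; first by rewrite leqn0 => /eqP ->; apply: legal.
have legal_n := IH (fun k kn => legal k (leqW kn)).
rewrite leq_eqVlt => /orP [/eqP -> | kn]; last exact: legal_n.
have [lref _] := disjoint_refinement_move legal_n.
exact: alice_legal_trans lref (legal n.+1 (leqnn _)).
Qed.

Lemma disjoint_refinement_strategy_legal : strategy_legal disjoint_refinement.
Proof.
move=> alice n /disjoint_refinement_legal_upto legal.
have [lref _] := disjoint_refinement_move legal.
exact: bob_legal_shrink (sigma_legal legal) lref.
Qed.

Lemma disjoint_refinement_disjoint_moves : disjoint_moves disjoint_refinement.
Proof.
by move=> alice n /disjoint_refinement_legal_upto /disjoint_refinement_move [].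
Qed.

Lemma disjoint_refinement_winning :
  winning_strategy sigma -> winning_strategy disjoint_refinement.
Proof.
move=> [_ sigma_wins]; split; first exact: disjoint_refinement_strategy_legal.
move=> alice legal.
have legal_sigma n : alice_legal (prevB sigma alice n) (alice n).
  exact: (disjoint_refinement_legal_upto (fun k _ => legal k)).
have [x x_in] := sigma_wins alice legal_sigma.
exists x => n _.
have sigma_next := sigma_legal (fun k (_ : (k <= n.+1)%N) => legal_sigma k).
have [i [iv xi]] := x_in n.+1 I; have [_ _ /(_ x xi) x_alice] := sigma_next i iv.
exact: alice_legal_unionl (legal n.+1) x x_alice.
Qed.

End DisjointRefinement.

Theorem lemma2p2 (T : topologicalType) :
  hausdorff_space T -> no_isolated_points T ->
  (exists sigma : bob_strategy T, winning_strategy sigma) ->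
  exists tau : bob_strategy T, winning_strategy tau /\ disjoint_moves tau.
Proof.
move=> hT noiso [sigma sigma_wins]; have [sigma_legal _] := sigma_wins.
have opens_disjoint := hausdorff_opens_have_disjoint_subsets hT noiso.
exists (disjoint_refinement sigma); split.
- exact: (disjoint_refinement_winning opens_disjoint sigma_legal sigma_wins).
- exact: (disjoint_refinement_disjoint_moves opens_disjoint sigma_legal).
Qed.
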